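(* Let $X$ be a set, $B\subseteq\mathbb{R}^X$ an $\mathbb{R}$-subalgebra and $Q\subseteq B$ a quadratic module with $K_{Q,X}=X$ and $\overline{m(X)}=K_{Q,Y_B}$. Let $f\in\mathbb{R}^X$ and $A=B[f]\subseteq\mathbb{R}^X$. In each of the following cases, $K_{Q',X}=X$ and $\overline{m(X)}=K_{Q',Y_A}$: (1) $f=\sqrt[r]{g}$ (pointwise real $r$-th root) with $r$ odd and $g\in B$, and $Q'$ is the quadratic module of $A$ generated by $Q$; (2) $f=\sqrt[s]{g}$ (pointwise nonnegative $s$-th root) with $s$ even, $g\in B$, $g\ge0$ on $X$, and $Q'$ is the quadratic module of $A$ generated by $Q$ and $f$; (3) $f=\frac1g$ with $g\in B$, $g(x)\ne0$ for all $x\in X$, and $Q'$ is the quadratic module of $A$ generated by $Q$; (4) $f=g\cdot\chi_{\{q\ge0\}}+h\cdot\chi_{\{q<0\}}$ for some $g,h,q\in B$ such that for $y\in K_{Q,Y_B}$, $\hat q(y)=0$ implies $\hat g(y)=\hat h(y)$, and $Q'$ is the quadratic module of $A$ generated by $Q$ and $-q(f-g)^2$, $q(f-h)^2$; (5) $f=\chi_{\{q\ge0\}}$ for some $q\in B$ satisfying $\{y\in K_{Q,Y_B}\mid\hat q(y)=0\}\subseteq\overline{\{y\in K_{Q,Y_B}\mid\hat q(y)>0\}}\cap\overline{\{y\in K_{Q,Y_B}\mid\hat q(y)<0\}}$, and $Q'$ is the quadratic module of $A$ generated by $Q$ and $qf$, $q(f-1)$.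
   Context: A quadratic module of a commutative unital $\mathbb{R}$-algebra $C$ is a subset $Q\subseteq C$ with $Q+Q\subseteq Q$, $c^2Q\subseteq Q$ for all $c\in C$, and $1\in Q$. For an $\mathbb{R}$-subalgebra $C\subseteq\mathbb{R}^X$ and a quadratic module $Q$ of $C$: $K_{Q,X}:=\{x\in X\mid g(x)\ge0\ \forall g\in Q\}$; $Y_C$ is the set of unital $\mathbb{R}$-algebra homomorphisms $C\to\mathbb{R}$; for $c\in C$, $\hat c\colon Y_C\to\mathbb{R}$, $\hat c(y)=y(c)$; $Y_C$ has the weakest topology making all $\hat c$ continuous; $K_{Q,Y_C}:=\{y\in Y_C\mid \hat g(y)\ge0\ \forall g\in Q\}$; $m\colon X\to Y_C$, $m(x)(c)=c(x)$. Overlines on subsets of $Y_C$ denote closure in $Y_C$. $\chi_S$ denotes the characteristic function of $S\subseteq X$, and $\{q\ge0\}=\{x\in X\mid q(x)\ge0\}$, etc. *)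

From Stdlib Require Import Reals List.
Open Scope R_scope.

Definition fadd {X : Type} (f g : X -> R) : X -> R := fun x => f x + g x.
Definition fmul {X : Type} (f g : X -> R) : X -> R := fun x => f x * g x.
Definition fscal {X : Type} (a : R) (f : X -> R) : X -> R := fun x => a * f x.
Definition fconst {X : Type} (a : R) : X -> R := fun _ => a.
Definition fopp {X : Type} (f : X -> R) : X -> R := fun x => - f x.

Definition is_subalgebra {X : Type} (C : (X -> R) -> Prop) : Prop :=
  C (fconst 1) /\
  (forall c d, C c -> C d -> C (fadd c d)) /\
  (forall c d, C c -> C d -> C (fmul c d)) /\
  (forall a c, C c -> C (fscal a c)).

Definition gen_alg {X : Type} (B : (X -> R) -> Prop) (f : X -> R) : (X -> R) -> Prop :=
  fun c => forall C, is_subalgebra C -> (forall b, B b -> C b) -> C f -> C c.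

Definition is_qmodule {X : Type} (C Q : (X -> R) -> Prop) : Prop :=
  (forall g, Q g -> C g) /\
  (forall g h, Q g -> Q h -> Q (fadd g h)) /\
  (forall c g, C c -> Q g -> Q (fmul (fmul c c) g)) /\
  Q (fconst 1).

Definition gen_qmodule {X : Type} (C Q G : (X -> R) -> Prop) : (X -> R) -> Prop :=
  fun a => forall M, is_qmodule C M -> (forall g, Q g -> M g) ->
                     (forall g, G g -> M g) -> M a.

Definition KX {X : Type} (Q : (X -> R) -> Prop) : X -> Prop :=
  fun x => forall g, Q g -> 0 <= g x.

(* Points of Y_C: unital R-algebra homomorphisms C -> R, represented by maps
   (X -> R) -> R whose values outside C are irrelevant. *)
Definition is_char {X : Type} (C : (X -> R) -> Prop) (y : (X -> R) -> R) : Prop :=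
  y (fconst 1) = 1 /\
  (forall c d, C c -> C d -> y (fadd c d) = y c + y d) /\
  (forall c d, C c -> C d -> y (fmul c d) = y c * y d) /\
  (forall a c, C c -> y (fscal a c) = a * y c).

Definition KY {X : Type} (Q : (X -> R) -> Prop) (y : (X -> R) -> R) : Prop :=
  forall g, Q g -> 0 <= y g.

Definition mpt {X : Type} (x : X) : (X -> R) -> R := fun c => c x.

(* y lies in the closure in Y_C of S (S a subset of Y_C), where Y_C carries the
   weakest topology making all c^ (c in C) continuous: every basic neighbourhood
   { z in Y_C | |z c_i - y c_i| < eps, i = 1..n } of y meets S. *)
Definition in_closure {X : Type} (C : (X -> R) -> Prop)
    (S : ((X -> R) -> R) -> Prop) (y : (X -> R) -> R) : Prop :=
  forall (cs : list (X -> R)) (eps : R), (forall c, In c cs -> C c) -> 0 < eps ->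
    exists z, is_char C z /\ S z /\ forall c, In c cs -> Rabs (z c - y c) < eps.

(* The conclusion "K_{Q,X} = X and closure(m(X)) = K_{Q,Y_C}". *)
Definition good {X : Type} (C Q : (X -> R) -> Prop) : Prop :=
  (forall x : X, KX Q x) /\
  (forall y, is_char C y ->
     (in_closure C (fun z => exists x : X, z = mpt x) y <-> KY Q y)).

Definition chi_ge0 {X : Type} (q : X -> R) : X -> R :=
  fun x => if Rle_dec 0 (q x) then 1 else 0.

From Stdlib Require Import Reals List Lra Psatz FunctionalExtensionality Classical.
Open Scope R_scope.

(* Let y be a character of A = B[f] lying in K_{Q',Y_A}.  Its restriction to B lies in
   K_{Q,Y_B}, which is the closure of m(X), and the generators of Q' force y(f) to be the
   value that f takes near y: the real root of y(g), the inverse of y(g), or y(g), y(h),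
   1, 0 according to the sign of y(q).  Hence f(x) tends to y(f) as m(x) tends to y|_B
   along a set S of points whose image adheres to y|_B (all of X, or {q > 0} resp. {q < 0}
   in case (5) when y(q) = 0).  The functions of A having this property form a subalgebra
   containing B and f, so all of A has it, which puts y in the closure of m(X) in Y_A.
   Conversely every point of that closure lies in K_{Q',Y_A}, since every generator of
   Q' is nonnegative on X. *)

Lemma pow_lt_compat_nonneg (n : nat) (u v : R) : 0 <= u < v -> u ^ S n < v ^ S n.
Proof.
  intros [Hu Huv]. induction n as [|n IH]; [simpl; lra|].
  change (u * u ^ S n < v * v ^ S n).
  assert (0 <= u ^ S n) by (apply pow_le; lra).
  nra.
Qed.

Lemma pow_odd_opp (k : nat) (u : R) : (- u) ^ (2 * k + 1) = - u ^ (2 * k + 1).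
Proof.
  replace (- u) with (-1 * u) by ring.
  rewrite Rpow_mult_distr.
  replace (2 * k + 1)%nat with (S (2 * k)) by lia.
  rewrite pow_1_odd; ring.
Qed.

Lemma pow_odd_lt_compat (r : nat) (u v : R) : Nat.Odd r -> u < v -> u ^ r < v ^ r.
Proof.
  intros [k ->] Huv.
  assert (Hpos : forall w, 0 < w -> 0 < w ^ (2 * k + 1)) by (intros; apply pow_lt; lra).
  destruct (Rle_or_lt 0 u) as [Hu|Hu]; [|destruct (Rle_or_lt v 0) as [Hv|Hv]].
  - replace (2 * k + 1)%nat with (S (2 * k)) by lia.
    apply pow_lt_compat_nonneg; lra.
  - rewrite <- (Ropp_involutive u), <- (Ropp_involutive v),
      (pow_odd_opp k (- u)), (pow_odd_opp k (- v)).
    apply Ropp_lt_contravar.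
    replace (2 * k + 1)%nat with (S (2 * k)) by lia.
    apply pow_lt_compat_nonneg; lra.
  - rewrite <- (Ropp_involutive u), (pow_odd_opp k (- u)).
    assert (0 < (- u) ^ (2 * k + 1)) by (apply Hpos; lra).
    assert (0 < v ^ (2 * k + 1)) by (apply Hpos; lra).
    lra.
Qed.

Lemma incr_inverse_continuous (P : R -> Prop) (phi : R -> R) (a eps : R) :
  (forall u v, P u -> u <= v -> P v) ->
  (forall u v, P u -> P v -> u < v -> phi u < phi v) ->
  P a -> 0 < eps ->
  exists delta, 0 < delta /\
    forall u, P u -> Rabs (phi u - phi a) < delta -> Rabs (u - a) < eps.
Proof.
  intros Hup Hincr Pa He.
  assert (Hle : forall u v, P u -> P v -> u <= v -> phi u <= phi v).
  { intros u v Pu Pv [Huv| ->]; [left; auto|lra]. }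
  assert (Pae : P (a + eps)) by (apply (Hup a); [exact Pa|lra]).
  assert (Hright : phi a < phi (a + eps)) by (apply Hincr; auto; lra).
  assert (Habove : forall u, P u -> phi u - phi a < phi (a + eps) - phi a -> u < a + eps).
  { intros u Pu Hu. destruct (Rlt_or_le u (a + eps)) as [|Hu']; auto.
    assert (phi (a + eps) <= phi u) by (apply Hle; auto). lra. }
  destruct (classic (P (a - eps))) as [Pam|Pam].
  - assert (Hleft : phi (a - eps) < phi a) by (apply Hincr; auto; lra).
    exists (Rmin (phi (a + eps) - phi a) (phi a - phi (a - eps))).
    split; [apply Rmin_glb_lt; lra|].
    intros u Pu Hu.
    pose proof (Rmin_l (phi (a + eps) - phi a) (phi a - phi (a - eps))).
    pose proof (Rmin_r (phi (a + eps) - phi a) (phi a - phi (a - eps))).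
    apply Rabs_def2 in Hu as [Hu1 Hu2].
    assert (u < a + eps) by (apply Habove; auto; lra).
    destruct (Rlt_or_le (a - eps) u) as [|Hu'].
    + apply Rabs_def1; lra.
    + assert (phi u <= phi (a - eps)) by (apply Hle; auto). lra.
  - exists (phi (a + eps) - phi a). split; [lra|].
    intros u Pu Hu.
    apply Rabs_def2 in Hu as [Hu1 Hu2].
    assert (u < a + eps) by (apply Habove; auto).
    destruct (Rlt_or_le (a - eps) u) as [|Hu'].
    + apply Rabs_def1; lra.
    + exfalso; apply Pam, (Hup u); auto.
Qed.

Lemma sqr_eq0_of_mult_neg (a d : R) : a < 0 -> 0 <= a * (d * d) -> d = 0.
Proof.
  intros Ha H. apply Rsqr_0_uniq, Rle_antisym; [|apply Rle_0_sqr].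
  unfold Rsqr. nra.
Qed.

Definition jointly_continuous (op : R -> R -> R) : Prop :=
  forall a b eps, 0 < eps -> exists delta, 0 < delta /\
    forall u v, Rabs (u - a) < delta -> Rabs (v - b) < delta ->
      Rabs (op u v - op a b) < eps.

Lemma Rplus_jointly_continuous : jointly_continuous Rplus.
Proof.
  intros a b eps He. exists (eps / 2). split; [lra|].
  intros u v Hu Hv.
  replace (u + v - (a + b)) with ((u - a) + (v - b)) by ring.
  eapply Rle_lt_trans; [apply Rabs_triang|lra].
Qed.

Lemma Rmult_jointly_continuous : jointly_continuous Rmult.
Proof.
  intros a b eps He.
  set (M := Rabs a + Rabs b + 1).
  assert (HM : 0 < M) by (unfold M; pose proof (Rabs_pos a); pose proof (Rabs_pos b); lra).
  exists (Rmin 1 (eps / M)). split.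
  { apply Rmin_glb_lt; [lra|]. apply Rdiv_lt_0_compat; lra. }
  intros u v Hu Hv.
  pose proof (Rmin_l 1 (eps / M)) as Hd1.
  assert (HdM : Rmin 1 (eps / M) * M <= eps).
  { pose proof (Rmin_r 1 (eps / M)).
    apply Rle_trans with (eps / M * M); [apply Rmult_le_compat_r; lra|].
    right; field; lra. }
  set (d := Rmin 1 (eps / M)) in *.
  replace (u * v - a * b) with ((u - a) * (v - b) + a * (v - b) + b * (u - a)) by ring.
  eapply Rle_lt_trans; [apply Rabs_triang|].
  eapply Rle_lt_trans; [apply Rplus_le_compat_r, Rabs_triang|].
  rewrite !Rabs_mult.
  pose proof (Rabs_pos (u - a)). pose proof (Rabs_pos (v - b)).
  pose proof (Rabs_pos a). pose proof (Rabs_pos b).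
  unfold M in HdM. nra.
Qed.

Section Characters.
Context {X : Type} (C : (X -> R) -> Prop).

Lemma subalgebra_const (a : R) : is_subalgebra C -> C (fconst a).
Proof.
  intros [H1 [_ [_ H4]]].
  replace (fconst a) with (fscal a (fconst (X := X) 1)); [auto|].
  extensionality x; unfold fconst, fscal; ring.
Qed.

Lemma subalgebra_opp (c : X -> R) : is_subalgebra C -> C c -> C (fopp c).
Proof.
  intros [_ [_ [_ H4]]] Hc.
  replace (fopp c) with (fscal (-1) c); [auto|].
  extensionality x; unfold fopp, fscal; ring.
Qed.

Lemma char_const (y : (X -> R) -> R) (a : R) :
  is_subalgebra C -> is_char C y -> y (fconst a) = a.
Proof.
  intros [H1 _] [Y1 [_ [_ Y4]]].
  replace (fconst a) with (fscal a (fconst (X := X) 1)).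
  - rewrite Y4, Y1; auto; ring.
  - extensionality x; unfold fconst, fscal; ring.
Qed.

Lemma char_opp (y : (X -> R) -> R) (c : X -> R) :
  is_char C y -> C c -> y (fopp c) = - y c.
Proof.
  intros [_ [_ [_ Y4]]] Hc.
  replace (fopp c) with (fscal (-1) c); [rewrite Y4; auto; ring|].
  extensionality x; unfold fopp, fscal; ring.
Qed.

Lemma char_sub (y : (X -> R) -> R) (c d : X -> R) :
  is_subalgebra C -> is_char C y -> C c -> C d -> y (fadd c (fopp d)) = y c - y d.
Proof.
  intros HC Hy Hc Hd. pose proof Hy as [_ [Y2 _]].
  rewrite Y2, (char_opp y d); auto using subalgebra_opp.
Qed.

Lemma char_pow (y : (X -> R) -> R) (f g : X -> R) (n : nat) :
  is_subalgebra C -> is_char C y -> C f -> (forall x, g x = f x ^ n) -> y g = y f ^ n.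
Proof.
  intros HC [Y1 [_ [Y3 _]]] Hf Hg.
  replace g with (fun x => f x ^ n) by (extensionality x; auto).
  clear g Hg.
  enough (C (fun x => f x ^ n) /\ y (fun x => f x ^ n) = y f ^ n) by tauto.
  induction n as [|n [IHC IHy]]; simpl.
  - split; [apply HC|exact Y1].
  - change (fun x => f x * f x ^ n) with (fmul f (fun x => f x ^ n)).
    split; [apply HC; auto|rewrite Y3, IHy; auto].
Qed.

Lemma char_mpt (x : X) : is_char C (mpt x).
Proof. unfold is_char, mpt, fconst, fadd, fmul, fscal; repeat split; auto. Qed.

Lemma in_closure_mono (S1 S2 : ((X -> R) -> R) -> Prop) (y : (X -> R) -> R) :
  (forall z, is_char C z -> S1 z -> S2 z) -> in_closure C S1 y -> in_closure C S2 y.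
Proof.
  intros H Hcl cs eps Hcs He.
  destruct (Hcl cs eps Hcs He) as [z [Hz [S1z Hzy]]].
  exists z; auto.
Qed.

Lemma in_closure_self (S : ((X -> R) -> R) -> Prop) (y : (X -> R) -> R) :
  is_char C y -> S y -> in_closure C S y.
Proof.
  intros Hy Sy cs eps _ He. exists y. split; [exact Hy|split; [exact Sy|]].
  intros c _. rewrite Rminus_diag, Rabs_R0; exact He.
Qed.

Lemma in_closure_mpt_nonneg (y : (X -> R) -> R) (a : X -> R) :
  C a -> (forall x, 0 <= a x) ->
  in_closure C (fun z => exists x : X, z = mpt x) y -> 0 <= y a.
Proof.
  intros Ha Hpos Hcl. destruct (Rle_or_lt 0 (y a)) as [|Hneg]; auto.
  destruct (Hcl (a :: nil) (- y a)) as [z [_ [[x ->] Hz]]];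
    [intros c [<-|[]]; auto|lra|].
  specialize (Hz a (or_introl eq_refl)). unfold mpt in Hz.
  specialize (Hpos x). apply Rabs_def2 in Hz. lra.
Qed.

End Characters.

Section GeneratedAlgebra.
Context {X : Type} (B : (X -> R) -> Prop) (f : X -> R).

Lemma gen_alg_subalgebra : is_subalgebra (gen_alg B f).
Proof.
  split; [|split; [|split]].
  - intros C [H1 _] _ _; exact H1.
  - intros c d Hc Hd C HC HBC HfC. apply HC; [apply Hc|apply Hd]; auto.
  - intros c d Hc Hd C HC HBC HfC. apply HC; [apply Hc|apply Hd]; auto.
  - intros a c Hc C HC HBC HfC. apply HC, Hc; auto.
Qed.

Lemma gen_alg_base (b : X -> R) : B b -> gen_alg B f b.
Proof. intros Hb C _ HBC _; auto. Qed.

Lemma gen_alg_gen : gen_alg B f f.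
Proof. intros C _ _ Hf; auto. Qed.

Lemma gen_alg_add (c d : X -> R) : gen_alg B f c -> gen_alg B f d -> gen_alg B f (fadd c d).
Proof. apply gen_alg_subalgebra. Qed.

Lemma gen_alg_mul (c d : X -> R) : gen_alg B f c -> gen_alg B f d -> gen_alg B f (fmul c d).
Proof. apply gen_alg_subalgebra. Qed.

Lemma gen_alg_opp (c : X -> R) : gen_alg B f c -> gen_alg B f (fopp c).
Proof. apply subalgebra_opp, gen_alg_subalgebra. Qed.

Lemma gen_alg_const (a : R) : gen_alg B f (fconst a).
Proof. apply subalgebra_const, gen_alg_subalgebra. Qed.

Lemma char_gen_alg_restrict (y : (X -> R) -> R) : is_char (gen_alg B f) y -> is_char B y.
Proof.
  intros [Y1 [Y2 [Y3 Y4]]]; repeat split; auto;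
    intros; [apply Y2|apply Y3|apply Y4]; apply gen_alg_base; auto.
Qed.

End GeneratedAlgebra.

#[local] Hint Resolve gen_alg_subalgebra gen_alg_base gen_alg_gen
  gen_alg_add gen_alg_mul gen_alg_opp gen_alg_const : core.

Section GeneratedQModule.
Context {X : Type} (A Q G : (X -> R) -> Prop).

Lemma gen_qmodule_base (g : X -> R) : Q g -> gen_qmodule A Q G g.
Proof. intros Hg M _ HQ _; auto. Qed.

Lemma gen_qmodule_gen (g : X -> R) : G g -> gen_qmodule A Q G g.
Proof. intros Hg M _ _ HG; auto. Qed.

Lemma KY_gen_qmodule_restrict (y : (X -> R) -> R) : KY (gen_qmodule A Q G) y -> KY Q y.
Proof. intros H g Hg; apply H, gen_qmodule_base, Hg. Qed.

Lemma KY_gen_qmodule (y : (X -> R) -> R) :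
  is_subalgebra A -> is_char A y -> (forall g, Q g -> A g) -> (forall g, G g -> A g) ->
  KY Q y -> KY G y -> KY (gen_qmodule A Q G) y.
Proof.
  intros [A1 [A2 [A3 _]]] [Y1 [Y2 [Y3 _]]] QA GA KQ KG g Hg.
  enough (A g /\ 0 <= y g) by tauto.
  apply (Hg (fun a => A a /\ 0 <= y a)).
  - split; [|split; [|split]].
    + intros a [Ha _]; exact Ha.
    + intros a b [Ha Pa] [Hb Pb]; split; [auto|rewrite Y2; auto; lra].
    + intros c a Hc [Ha Pa]; split; [auto|].
      rewrite !Y3; auto. apply Rmult_le_pos; [apply Rle_0_sqr|exact Pa].
    + split; [exact A1|rewrite Y1; lra].
  - intros a Ha; split; auto.
  - intros a Ha; split; auto.
Qed.

End GeneratedQModule.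

Definition mpt_image {X : Type} (S : X -> Prop) : ((X -> R) -> R) -> Prop :=
  fun z => exists x, S x /\ z = mpt x.

(* [tends B S y c]: [c x] tends to [y c] as [mpt x] tends to [y] in [Y_B] with [x] in [S]. *)
Definition tends {X : Type} (B : (X -> R) -> Prop) (S : X -> Prop)
    (y : (X -> R) -> R) (c : X -> R) : Prop :=
  forall eps, 0 < eps -> exists L delta, (forall b, In b L -> B b) /\ 0 < delta /\
    forall x, S x -> (forall b, In b L -> Rabs (b x - y b) < delta) ->
      Rabs (c x - y c) < eps.

Section Tends.
Context {X : Type} (B : (X -> R) -> Prop) (S : X -> Prop) (y : (X -> R) -> R).

Lemma tends_list (cs : list (X -> R)) : (forall c, In c cs -> tends B S y c) ->
  forall eps, 0 < eps -> exists L delta, (forall b, In b L -> B b) /\ 0 < delta /\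
    forall x, S x -> (forall b, In b L -> Rabs (b x - y b) < delta) ->
      forall c, In c cs -> Rabs (c x - y c) < eps.
Proof.
  induction cs as [|c cs IH]; intros Hcs eps He.
  - exists nil, 1. split; [intros b []|split; [lra|]]. intros x _ _ c [].
  - destruct (IH (fun c' H => Hcs c' (or_intror H)) eps He) as [L1 [d1 [HL1 [Hd1 H1]]]].
    destruct (Hcs c (or_introl eq_refl) eps He) as [L2 [d2 [HL2 [Hd2 H2]]]].
    exists (L1 ++ L2), (Rmin d1 d2). split.
    { intros b Hb. apply in_app_or in Hb as [|]; auto. }
    split; [apply Rmin_glb_lt; auto|].
    intros x Sx Hx c' [<-|Hc'].
    + apply H2; auto. intros b Hb.
      eapply Rlt_le_trans; [apply Hx, in_or_app; auto|apply Rmin_r].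
    + apply H1; auto. intros b Hb.
      eapply Rlt_le_trans; [apply Hx, in_or_app; auto|apply Rmin_l].
Qed.

Lemma tends_of_control (f g : X -> R) : B g ->
  (forall eps, 0 < eps -> exists delta, 0 < delta /\
     forall x, S x -> Rabs (g x - y g) < delta -> Rabs (f x - y f) < eps) ->
  tends B S y f.
Proof.
  intros Hg Hctl eps He. destruct (Hctl eps He) as [delta [Hd H]].
  exists (g :: nil), delta. split; [intros b [<-|[]]; auto|split; auto].
  intros x Sx Hx. apply H, Hx; auto. left; auto.
Qed.

Lemma tends_pow_root (n : nat) (P : R -> Prop) (f g : X -> R) :
  (forall u v, P u -> u <= v -> P v) ->
  (forall u v, P u -> P v -> u < v -> u ^ n < v ^ n) ->
  B g -> (forall x, P (f x) /\ g x = f x ^ n) -> P (y f) -> y g = y f ^ n ->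
  tends B S y f.
Proof.
  intros Hup Hincr Hg Hf Pyf Hyg. apply tends_of_control with g; auto.
  intros eps He.
  destruct (incr_inverse_continuous P (fun u => u ^ n) (y f) eps)
    as [delta [Hd H]]; auto.
  exists delta. split; auto. intros x _ Hx. apply H; [apply Hf|].
  rewrite <- Hyg, <- (proj2 (Hf x)). exact Hx.
Qed.

Lemma tends_comp_continuous (phi : R -> R) (f g : X -> R) :
  B g -> continuity_pt phi (y g) ->
  (forall x, S x -> f x = phi (g x)) -> y f = phi (y g) -> tends B S y f.
Proof.
  intros Hg Hphi Hf Hyf. apply tends_of_control with g; auto.
  intros eps He. destruct (Hphi eps He) as [alpha [Halpha H]].
  exists alpha. split; auto. intros x Sx Hx. rewrite Hf, Hyf by auto.
  destruct (Req_dec (y g) (g x)) as [<-|Hne].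
  - rewrite Rminus_diag, Rabs_R0; exact He.
  - apply (H (g x)). repeat split; auto.
Qed.

Lemma tends_base (b : X -> R) : B b -> tends B S y b.
Proof. intros Hb. apply tends_of_control with b; auto. intros eps He; exists eps; auto. Qed.

Lemma tends_const (a : R) : y (fconst a) = a -> tends B S y (fconst a).
Proof.
  intros Ha eps He. exists nil, 1. split; [intros b []|split; [lra|]].
  intros x _ _. unfold fconst at 1. rewrite Ha, Rminus_diag, Rabs_R0; auto.
Qed.

Lemma tends_binop (op : R -> R -> R) (c d e : X -> R) : jointly_continuous op ->
  (forall x, e x = op (c x) (d x)) -> y e = op (y c) (y d) ->
  tends B S y c -> tends B S y d -> tends B S y e.
Proof.
  intros Hop He Hy Hc Hd eps Heps.
  destruct (Hop (y c) (y d) eps Heps) as [delta [Hdelta Hclose]].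
  destruct (tends_list (c :: d :: nil)) with delta as [L [d' [HL [Hd' H]]]]; auto.
  { intros c' [<-|[<-|[]]]; auto. }
  exists L, d'. split; [auto|split; [auto|]].
  intros x Sx Hx. rewrite He, Hy.
  apply Hclose; apply H; auto; simpl; auto.
Qed.

Lemma tends_cases (f c d : X -> R) :
  (forall x, S x -> f x = c x \/ f x = d x) -> y f = y c -> y f = y d ->
  tends B S y c -> tends B S y d -> tends B S y f.
Proof.
  intros Hf Hyc Hyd Hc Hd eps He.
  destruct (tends_list (c :: d :: nil)) with eps as [L [delta [HL [Hdelta H]]]]; auto.
  { intros c' [<-|[<-|[]]]; auto. }
  exists L, delta. split; [auto|split; [auto|]].
  intros x Sx Hx.
  destruct (Hf x Sx) as [-> | ->]; [rewrite Hyc|rewrite Hyd]; apply H; simpl; auto.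
Qed.

Lemma tends_ext (f c : X -> R) :
  (forall x, S x -> f x = c x) -> y f = y c -> tends B S y c -> tends B S y f.
Proof. intros Hf Hy Hc. apply tends_cases with c c; auto. Qed.

Lemma tends_gen_alg (f : X -> R) : is_char (gen_alg B f) y -> tends B S y f ->
  forall c, gen_alg B f c -> tends B S y c.
Proof.
  intros Hy Hf c Hc.
  pose proof (gen_alg_subalgebra B f) as HA.
  pose proof Hy as [Y1 [Y2 [Y3 Y4]]].
  enough (gen_alg B f c /\ tends B S y c) by tauto.
  apply (Hc (fun c => gen_alg B f c /\ tends B S y c)).
  - split; [|split; [|split]].
    + split; [apply HA|apply tends_const, Y1].
    + intros a b [Ha Ta] [Hb Tb]. split; [apply HA; auto|].
      apply tends_binop with Rplus a b; auto using Rplus_jointly_continuous.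
    + intros a b [Ha Ta] [Hb Tb]. split; [apply HA; auto|].
      apply tends_binop with Rmult a b; auto using Rmult_jointly_continuous.
    + intros r a [Ha Ta]. split; [apply HA; auto|].
      apply tends_binop with Rmult (fconst r) a; auto using Rmult_jointly_continuous.
      * rewrite Y4, (char_const (gen_alg B f)); auto.
      * apply tends_const, (char_const (gen_alg B f)); auto.
  - intros b Hb. split; [apply gen_alg_base; auto|apply tends_base; auto].
  - split; [apply gen_alg_gen|exact Hf].
Qed.

Lemma in_closure_of_tends (f : X -> R) :
  is_char (gen_alg B f) y -> in_closure B (mpt_image S) y -> tends B S y f ->
  in_closure (gen_alg B f) (fun z => exists x : X, z = mpt x) y.
Proof.
  intros Hy Hcl Hf cs eps Hcs He.
  destruct (tends_list cs (fun c H => tends_gen_alg f Hy Hf c (Hcs c H)) eps He)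
    as [L [delta [HL [Hd H]]]].
  destruct (Hcl L delta HL Hd) as [z [_ [[x [Sx ->]] Hx]]].
  exists (mpt x). split; [apply char_mpt|split; [exists x; auto|]].
  intros c Hc. apply H; auto.
Qed.

End Tends.

Section GoodExtension.
Context {X : Type} (B Q : (X -> R) -> Prop).
Hypotheses (HQ : is_qmodule B Q) (Hgood : good B Q).

Lemma in_closure_mpt_of_KY (y : (X -> R) -> R) :
  is_char B y -> KY Q y -> in_closure B (mpt_image (fun _ => True)) y.
Proof.
  intros Hy HK. apply in_closure_mono with (fun z => exists x : X, z = mpt x).
  - intros z _ [x ->]. exists x; auto.
  - apply (proj2 Hgood y Hy), HK.
Qed.

Lemma in_closure_mpt_pos (y : (X -> R) -> R) (a : X -> R) : B a ->
  in_closure B (fun z => KY Q z /\ 0 < z a) y ->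
  in_closure B (mpt_image (fun x => 0 < a x)) y.
Proof.
  intros Ha Hcl cs eps Hcs He.
  destruct (Hcl cs (eps / 2)) as [z [Hz [[KZ Za] Hzy]]]; auto; [lra|].
  destruct (proj2 (proj2 Hgood z Hz) KZ (a :: cs) (Rmin (eps / 2) (z a)))
    as [w [Hw [[x ->] Hx]]].
  { intros c [<-|Hc]; auto. }
  { apply Rmin_glb_lt; lra. }
  pose proof (Rmin_l (eps / 2) (z a)). pose proof (Rmin_r (eps / 2) (z a)).
  exists (mpt x). split; [exact Hw|split].
  - exists x. split; [|reflexivity].
    specialize (Hx a (or_introl eq_refl)). unfold mpt in Hx.
    apply Rabs_def2 in Hx. lra.
  - intros c Hc. specialize (Hx c (or_intror Hc)). specialize (Hzy c Hc).
    unfold mpt in *.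
    replace (c x - y c) with ((c x - z c) + (z c - y c)) by ring.
    eapply Rle_lt_trans; [apply Rabs_triang|lra].
Qed.

Lemma in_closure_mpt_pos_of_KY (y : (X -> R) -> R) (a : X -> R) :
  B a -> is_char B y -> KY Q y -> 0 < y a ->
  in_closure B (mpt_image (fun x => 0 < a x)) y.
Proof. intros Ha Hy HK Hya. apply in_closure_mpt_pos, in_closure_self; auto. Qed.

Lemma good_gen_alg (f : X -> R) (G : (X -> R) -> Prop) :
  (forall g, G g -> gen_alg B f g /\ forall x, 0 <= g x) ->
  (forall y, is_char (gen_alg B f) y -> KY (gen_qmodule (gen_alg B f) Q G) y ->
     exists S, in_closure B (mpt_image S) y /\ tends B S y f) ->
  good (gen_alg B f) (gen_qmodule (gen_alg B f) Q G).
Proof.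
  intros HG Htends.
  assert (QA : forall g, Q g -> gen_alg B f g) by (intros g Hg; apply gen_alg_base, HQ, Hg).
  assert (GA : forall g, G g -> gen_alg B f g) by (intros g Hg; apply HG, Hg).
  split.
  - intro x. apply (KY_gen_qmodule _ _ _ (mpt x)); auto using char_mpt.
    + intros g Hg. apply (proj1 Hgood x g Hg).
    + intros g Hg. apply HG, Hg.
  - intros y Hy. split.
    + intro Hcl. apply KY_gen_qmodule; auto.
      * intros g Hg. apply (in_closure_mpt_nonneg (gen_alg B f)); auto.
        intro x. apply (proj1 Hgood x g Hg).
      * intros g Hg. apply (in_closure_mpt_nonneg (gen_alg B f)); auto. apply HG, Hg.
    + intro HK. destruct (Htends y Hy HK) as [S [HS Hf]].
      apply in_closure_of_tends with S; auto.
Qed.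

Lemma good_gen_alg_tends (f : X -> R) (G : (X -> R) -> Prop) :
  (forall g, G g -> gen_alg B f g /\ forall x, 0 <= g x) ->
  (forall y, is_char (gen_alg B f) y -> KY (gen_qmodule (gen_alg B f) Q G) y ->
     tends B (fun _ => True) y f) ->
  good (gen_alg B f) (gen_qmodule (gen_alg B f) Q G).
Proof.
  intros HG Htends. apply good_gen_alg; auto.
  intros y Hy HK. exists (fun _ => True). split; auto.
  apply in_closure_mpt_of_KY; [apply (char_gen_alg_restrict B f), Hy|].
  apply (KY_gen_qmodule_restrict (gen_alg B f) _ G), HK.
Qed.

End GoodExtension.

Section Cases.
Context {X : Type} (B Q : (X -> R) -> Prop).
Hypotheses (HB : is_subalgebra B) (HQ : is_qmodule B Q) (Hgood : good B Q).

Lemma good_odd_root (r : nat) (g f : X -> R) : Nat.Odd r -> B g ->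
  (forall x, f x ^ r = g x) ->
  good (gen_alg B f) (gen_qmodule (gen_alg B f) Q (fun _ => False)).
Proof.
  intros Hr Hg Hf. apply good_gen_alg_tends; auto; [intros _ []|].
  intros y Hy _.
  apply tends_pow_root with r (fun _ => True) g; auto using pow_odd_lt_compat.
  apply (char_pow (gen_alg B f)); auto.
Qed.

Lemma good_nonneg_root (s : nat) (g f : X -> R) : (1 <= s)%nat -> B g ->
  (forall x, 0 <= f x /\ f x ^ s = g x) ->
  good (gen_alg B f) (gen_qmodule (gen_alg B f) Q (fun u => u = f)).
Proof.
  intros Hs Hg Hf.
  apply good_gen_alg_tends; auto; [intros u ->; split; [apply gen_alg_gen|apply Hf]|].
  intros y Hy HK.
  apply tends_pow_root with s (fun u => 0 <= u) g; auto.
  - intros u v Hu Huv; lra.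
  - intros u v Hu _ Huv. replace s with (S (s - 1)) by lia.
    apply pow_lt_compat_nonneg; lra.
  - intro x. split; [apply Hf|symmetry; apply Hf].
  - apply HK, gen_qmodule_gen; reflexivity.
  - apply (char_pow (gen_alg B f)); auto.
    intro x; symmetry; apply Hf.
Qed.

Lemma good_inv (g f : X -> R) : B g -> (forall x, f x * g x = 1) ->
  good (gen_alg B f) (gen_qmodule (gen_alg B f) Q (fun _ => False)).
Proof.
  intros Hg Hf. apply good_gen_alg_tends; auto; [intros _ []|].
  intros y [Y1 [_ [Y3 _]] ] _.
  assert (Hyfg : y f * y g = 1).
  { rewrite <- Y3 by auto.
    replace (fmul f g) with (fconst (X := X) 1); [exact Y1|].
    extensionality x; symmetry; apply Hf. }
  assert (Hyg : y g <> 0) by (intro E; rewrite E in Hyfg; lra).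
  apply tends_comp_continuous with Rinv g; auto.
  - exact (continuity_pt_inv id (y g) (derivable_continuous_pt _ _ (derivable_pt_id _)) Hyg).
  - intros x _. specialize (Hf x). assert (g x <> 0) by (intro E; rewrite E in Hf; lra).
    field_simplify_eq; auto.
  - field_simplify_eq; auto.
Qed.

Lemma char_piecewise (g h q f : X -> R) (y : (X -> R) -> R) :
  B g -> B h -> B q -> (forall x, f x = if Rle_dec 0 (q x) then g x else h x) ->
  is_char (gen_alg B f) y ->
  0 <= y (fmul (fopp q) (fmul (fadd f (fopp g)) (fadd f (fopp g)))) ->
  0 <= y (fmul q (fmul (fadd f (fopp h)) (fadd f (fopp h)))) ->
  (y q < 0 -> y f = y h) /\ (0 < y q -> y f = y g) /\ (y f = y g \/ y f = y h).
Proof.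
  intros Hg Hh Hq Hf Hy V1 V2. pose proof Hy as [_ [_ [Y3 _]]].
  assert (Hyfg : y (fadd f (fopp g)) = y f - y g) by (apply (char_sub (gen_alg B f)); auto).
  assert (Hyfh : y (fadd f (fopp h)) = y f - y h) by (apply (char_sub (gen_alg B f)); auto).
  rewrite !Y3, (char_opp (gen_alg B f)), Hyfg in V1 by auto.
  rewrite !Y3, Hyfh in V2 by auto.
  split; [|split].
  - intro Hneg. enough (y f - y h = 0) by lra.
    apply (sqr_eq0_of_mult_neg (y q)); auto.
  - intro Hpos. enough (y f - y g = 0) by lra.
    apply (sqr_eq0_of_mult_neg (- y q)); auto; lra.
  - enough (Hprod : (y f - y g) * (y f - y h) = 0).
    { apply Rmult_integral in Hprod as [|]; [left|right]; lra. }
    rewrite <- Hyfg, <- Hyfh, <- Y3 by auto.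
    replace (fmul (fadd f (fopp g)) (fadd f (fopp h))) with (fconst (X := X) 0).
    + apply (char_const (gen_alg B f)); auto.
    + extensionality x. unfold fmul, fopp, fadd, fconst. rewrite Hf.
      destruct (Rle_dec 0 (q x)); ring.
Qed.

Lemma good_piecewise (g h q f : X -> R) : B g -> B h -> B q ->
  (forall y, is_char B y -> KY Q y -> y q = 0 -> y g = y h) ->
  (forall x, f x = if Rle_dec 0 (q x) then g x else h x) ->
  good (gen_alg B f)
    (gen_qmodule (gen_alg B f) Q
       (fun u => u = fmul (fopp q) (fmul (fadd f (fopp g)) (fadd f (fopp g)))
              \/ u = fmul q (fmul (fadd f (fopp h)) (fadd f (fopp h))))).
Proof.
  intros Hg Hh Hq Hyq Hf.
  apply good_gen_alg; auto.
  { intros u [-> | ->]; (split; [auto 7|]);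
      intro x; unfold fmul, fopp, fadd; rewrite Hf;
      destruct (Rle_dec 0 (q x)) as [|Hx%Rnot_le_lt];
      first [rewrite Rplus_opp_r; lra | apply Rmult_le_pos; [lra|apply Rle_0_sqr]]. }
  intros y Hy HK.
  pose proof (char_gen_alg_restrict B f y Hy) as HyB.
  pose proof (KY_gen_qmodule_restrict (gen_alg B f) Q _ y HK) as HKQ.
  destruct (char_piecewise g h q f y) as [Hneg [Hpos Hgh]]; auto;
    [apply HK, gen_qmodule_gen; auto..|].
  destruct (Rtotal_order (y q) 0) as [Hlt | [Heq | Hgt]].
  - exists (fun x => 0 < fopp q x). split.
    + apply (in_closure_mpt_pos_of_KY B Q); auto; [apply subalgebra_opp; auto|].
      rewrite (char_opp B); auto; lra.
    + apply tends_ext with h; auto using tends_base.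
      intros x Hx. unfold fopp in Hx. rewrite Hf. destruct (Rle_dec 0 (q x)); lra.
  - exists (fun _ => True). split; [apply (in_closure_mpt_of_KY B Q); auto|].
    assert (Egh : y g = y h) by auto.
    apply tends_cases with g h; auto using tends_base; [|destruct Hgh; congruence..].
    intros x _. rewrite Hf. destruct (Rle_dec 0 (q x)); auto.
  - exists (fun x => 0 < q x). split.
    + apply (in_closure_mpt_pos_of_KY B Q); auto.
    + apply tends_ext with g; auto using tends_base.
      intros x Hx. rewrite Hf. destruct (Rle_dec 0 (q x)); lra.
Qed.

Lemma char_chi_ge0 (q : X -> R) (y : (X -> R) -> R) : B q ->
  is_char (gen_alg B (chi_ge0 q)) y ->
  0 <= y (fmul q (chi_ge0 q)) -> 0 <= y (fmul q (fadd (chi_ge0 q) (fconst (-1)))) ->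
  (y (chi_ge0 q) = 1 /\ 0 <= y q) \/ (y (chi_ge0 q) = 0 /\ y q <= 0).
Proof.
  intros Hq Hy V1 V2. set (f := chi_ge0 q) in *. pose proof Hy as [_ [Y2 [Y3 _]]].
  rewrite Y3 in V1 by auto.
  rewrite Y3, Y2, (char_const (gen_alg B f)) in V2 by auto.
  assert (Hidem : y f * y f = y f).
  { rewrite <- Y3 by auto. f_equal. extensionality x.
    unfold fmul, f, chi_ge0. destruct (Rle_dec 0 (q x)); ring. }
  destruct (Rmult_integral (y f) (y f - 1)) as [E|E]; [lra|right|left]; split; nra.
Qed.

Lemma good_chi (q : X -> R) : B q ->
  (forall y, is_char B y -> KY Q y -> y q = 0 ->
     in_closure B (fun z => KY Q z /\ z q > 0) y /\
     in_closure B (fun z => KY Q z /\ z q < 0) y) ->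
  good (gen_alg B (chi_ge0 q))
    (gen_qmodule (gen_alg B (chi_ge0 q)) Q
       (fun u => u = fmul q (chi_ge0 q) \/ u = fmul q (fadd (chi_ge0 q) (fconst (-1))))).
Proof.
  intros Hq Hcl. set (f := chi_ge0 q).
  apply good_gen_alg; auto.
  { intros u [-> | ->]; (split; [auto|]);
      intro x; unfold fmul, fadd, fconst, f, chi_ge0;
      destruct (Rle_dec 0 (q x)) as [|Hx%Rnot_le_lt]; nra. }
  intros y Hy HK.
  pose proof (char_gen_alg_restrict B f y Hy) as HyB.
  pose proof (KY_gen_qmodule_restrict (gen_alg B f) Q _ y HK) as HKQ.
  assert (Tconst : forall S c, (forall x, S x -> f x = c) -> y f = c -> tends B S y f).
  { intros S c HS Hc. apply tends_ext with (fconst c); auto.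
    - rewrite (char_const (gen_alg B f)); auto.
    - apply tends_const, (char_const (gen_alg B f)); auto. }
  destruct (char_chi_ge0 q y) as [[E Hyq] | [E Hyq]]; auto;
    [apply HK, gen_qmodule_gen; auto..| |].
  - exists (fun x => 0 < q x). split.
    + destruct Hyq as [Hyq| Hyq].
      * apply (in_closure_mpt_pos_of_KY B Q); auto.
      * apply (in_closure_mpt_pos B Q); auto. apply Hcl; auto.
    + apply Tconst with 1; auto.
      intros x Hx. unfold f, chi_ge0. destruct (Rle_dec 0 (q x)); lra.
  - assert (Hopp : forall z, is_char B z -> z (fopp q) = - z q)
      by (intros; apply (char_opp B); auto).
    exists (fun x => 0 < fopp q x). split.
    + destruct Hyq as [Hyq| Hyq].
      * apply (in_closure_mpt_pos_of_KY B Q); auto; [apply subalgebra_opp; auto|].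
        rewrite Hopp; auto; lra.
      * apply (in_closure_mpt_pos B Q); auto; [apply subalgebra_opp; auto|].
        apply (in_closure_mono B) with (2 := proj2 (Hcl y HyB HKQ Hyq)).
        intros z Hz [KZ Zq]. rewrite Hopp; auto. split; [exact KZ|lra].
    + apply Tconst with 0; auto.
      intros x Hx. unfold fopp in Hx. unfold f, chi_ge0. destruct (Rle_dec 0 (q x)); lra.
Qed.
End Cases.

Theorem proposition3p3 (X : Type) (B Q : (X -> R) -> Prop)
  (HB : is_subalgebra B) (HQ : is_qmodule B Q) (Hgood : good B Q) :
  (* (1) odd real root *)
  (forall (r : nat) (g f : X -> R), Nat.Odd r -> B g ->
     (forall x, f x ^ r = g x) ->
     good (gen_alg B f) (gen_qmodule (gen_alg B f) Q (fun _ => False))) /\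
  (* (2) even nonnegative root *)
  (forall (s : nat) (g f : X -> R), Nat.Even s -> (2 <= s)%nat -> B g ->
     (forall x, 0 <= g x) ->
     (forall x, 0 <= f x /\ f x ^ s = g x) ->
     good (gen_alg B f) (gen_qmodule (gen_alg B f) Q (fun u => u = f))) /\
  (* (3) inverse *)
  (forall (g : X -> R), B g -> (forall x, g x <> 0) ->
     let f := fun x => / g x in
     good (gen_alg B f) (gen_qmodule (gen_alg B f) Q (fun _ => False))) /\
  (* (4) piecewise *)
  (forall (g h q : X -> R), B g -> B h -> B q ->
     (forall y, is_char B y -> KY Q y -> y q = 0 -> y g = y h) ->
     let f := fun x => if Rle_dec 0 (q x) then g x else h x in
     good (gen_alg B f)
       (gen_qmodule (gen_alg B f) Q
          (fun u => u = fmul (fopp q) (fmul (fadd f (fopp g)) (fadd f (fopp g)))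
                 \/ u = fmul q (fmul (fadd f (fopp h)) (fadd f (fopp h)))))) /\
  (* (5) characteristic function *)
  (forall (q : X -> R), B q ->
     (forall y, is_char B y -> KY Q y -> y q = 0 ->
        in_closure B (fun z => KY Q z /\ z q > 0) y /\
        in_closure B (fun z => KY Q z /\ z q < 0) y) ->
     let f := chi_ge0 q in
     good (gen_alg B f)
       (gen_qmodule (gen_alg B f) Q
          (fun u => u = fmul q f \/ u = fmul q (fadd f (fconst (-1)))))).
Proof.
  split; [|split; [|split; [|split]]].
  - intros r g f Hr Hg Hf. apply good_odd_root with r g; auto.
  - intros s g f _ Hs Hg _ Hf. apply good_nonneg_root with s g; auto. lia.
  - intros g Hg Hne f. apply good_inv with g; auto.
    intro x. unfold f. field. auto.
  - intros g h q Hg Hh Hq Hyq f. apply good_piecewise; auto.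
  - intros q Hq Hcl f. apply good_chi; auto.
Qed.
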